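(* Consider the uncertain system $$\dot{\mathbf{x}} = \mathbf{A}\mathbf{x} + \mathbf{b}k_p\big(u + \boldsymbol{\theta}^T\boldsymbol{\phi}(\mathbf{x})\big),$$ with $\mathbf{x}\in\mathbb{R}^n$, $u\in\mathbb{R}$, unknown $\mathbf{A}\in\mathbb{R}^{n\times n}$, known $\mathbf{b}\in\mathbb{R}^n$ with $\mathbf{b}^T\mathbf{b}>0$, unknown constant $k_p\ne0$ with known sign $k_p'=\operatorname{sign}(k_p)$, unknown $\boldsymbol{\theta}\in\mathbb{R}^p$, and known locally Lipschitz $\boldsymbol{\phi}:\mathbb{R}^n\to\mathbb{R}^p$. Let $\dot{\mathbf{x}}_r=\mathbf{A}_r\mathbf{x}_r+\mathbf{b}_r r$ with $\mathbf{A}_r$ Hurwitz and $r$ bounded piecewise continuous, and let $\mathbf{P},\mathbf{Q}$ be symmetric positive definite with $\mathbf{A}_r^T\mathbf{P}+\mathbf{P}\mathbf{A}_r+\mathbf{Q}=\mathbf{0}$. Assume ideal gains $\mathbf{k}_x,k_r$ exist with $\mathbf{A}+\mathbf{b}k_p\mathbf{k}_x^T=\mathbf{A}_r$, $\mathbf{b}k_pk_r=\mathbf{b}_r$. Let $\mathbf{W}^T=[\mathbf{A}\ \ \mathbf{b}k_p\ \ \mathbf{b}k_p\boldsymbol{\theta}^T]\in\mathbb{R}^{n\times(n+1+p)}$. Let $t_q>t_0$ and let $\mathbf{Y}_m(t)\in\mathbb{R}^{n\times(n+1+p)}$ be a signal with $\mathbf{Y}_m(t)=\mathbf{W}^T$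 for all $t\ge t_q$ (as produced by the paper's data-storage procedure once the regressor $[\mathbf{x}^T,u,\boldsymbol{\phi}^T]^T$ satisfies the finite excitation condition at time $t_q$), and let $\eta(t)=0$ for $t<t_q$ and $\eta(t)=1$ for $t\ge t_q$. Define $$\mathbf{E}_1=\mathbf{A}_r-\mathbf{Y}_m\begin{bmatrix}\mathbf{I}_n & \mathbf{0}_{n\times(1+p)}\end{bmatrix}^T-\mathbf{Y}_m\mathbf{c}\,\hat{\mathbf{k}}_x^T,\quad \mathbf{E}_2=\mathbf{b}_r-\mathbf{Y}_m\mathbf{c}\,\hat{k}_r,\quad \mathbf{E}_3=\mathbf{Y}_m\begin{bmatrix}\mathbf{0}_{p\times(n+1)} & \mathbf{I}_p\end{bmatrix}^T-\mathbf{Y}_m\mathbf{c}\,\hat{\boldsymbol{\theta}}^T,$$ where $\mathbf{c}=[\mathbf{0}_{1\times n}\ 1\ \mathbf{0}_{1\times p}]^T$. Apply $u=\hat{\mathbf{k}}_x^T\mathbf{x}+\hat{k}_r r-\hat{\boldsymbol{\theta}}^T\boldsymbol{\phi}(\mathbf{x})$ with $$\dot{\hat{\mathbf{k}}}_x=-\mathbf{x}\mathbf{e}^T\mathbf{P}\mathbf{b}k_p'+\eta\mathbf{E}_1^T\mathbf{b}k_p',\quad \dot{\hat{k}}_r=-r\mathbf{e}^T\mathbf{P}\mathbf{b}k_p'+\eta\mathbf{E}_2^T\mathbf{b}k_p',\quad \dot{\hat{\boldsymbol{\theta}}}=\boldsymbol{\phi}(\mathbf{x})\mathbf{e}^T\mathbf{P}\mathbf{b}k_p'+\eta\mathbf{E}_3^T\mathbf{b}k_p',$$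 where $\mathbf{e}=\mathbf{x}-\mathbf{x}_r$. Let $\boldsymbol{\chi}=[\mathbf{e}^T,\tilde{\mathbf{k}}_x^T,\tilde{k}_r,\tilde{\boldsymbol{\theta}}^T]^T$ with $\tilde{\mathbf{k}}_x=\hat{\mathbf{k}}_x-\mathbf{k}_x$, $\tilde{k}_r=\hat{k}_r-k_r$, $\tilde{\boldsymbol{\theta}}=\hat{\boldsymbol{\theta}}-\boldsymbol{\theta}$. Then: (1) the origin of the closed-loop error system in $\boldsymbol{\chi}$ is uniformly stable for $t\ge t_0$; (2) it is exponentially stable for $t>t_q$; (3) for all $t>t_q$, $$\|\boldsymbol{\chi}(t)\|\le \alpha\, e^{-\kappa(t-t_q)}\|\boldsymbol{\chi}(t_0)\|,$$ with $$\kappa=\frac{1}{2}\,\frac{\min\{\lambda_{\min}(\mathbf{Q}),\,2|k_p|^2\mathbf{b}^T\mathbf{b}\}}{\max\{\lambda_{\max}(\mathbf{P}),\,|k_p|\}},\qquad \alpha=\sqrt{\frac{\max\{\lambda_{\max}(\mathbf{P}),\,|k_p|\}}{\min\{\lambda_{\min}(\mathbf{P}),\,|k_p|\}}},$$ so that the rate $\kappa$ depends only on $\mathbf{P},\mathbf{Q},\mathbf{b},|k_p|$ and not on the excitation level of the regressor.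
   Context: A bounded signal $\boldsymbol{\varphi}(t)\in\mathbb{R}^q$ is finitely exciting if there are constants $\gamma,T>0$ and at least one sequence of times $t_1,\dots,t_q$ in an interval $[t,t+T]$ such that the matrix $[\boldsymbol{\varphi}(t_1)\ \cdots\ \boldsymbol{\varphi}(t_q)]$ is invertible with inverse of norm at most $\gamma$ ($\gamma$ is the excitation level). In the paper, once this holds for $\boldsymbol{\varphi}=[\mathbf{x}^T,u,\boldsymbol{\phi}^T]^T$ (by time $t_q$), filtered data are orthonormalized into an orthogonal $\boldsymbol{\Phi}_b$ with $\mathbf{Y}_b=\mathbf{W}^T\boldsymbol{\Phi}_b$, and $\mathbf{Y}_m=\mathbf{Y}_b\boldsymbol{\Phi}_b^T$, $\eta=\det(\boldsymbol{\Phi}_b\boldsymbol{\Phi}_b^T)$, giving $\mathbf{Y}_m=\mathbf{W}^T$ and $\eta=1$ for $t\ge t_q$, and $\eta=0$ before. $k_p'$ is the known sign of $k_p$; $\lambda_{\min},\lambda_{\max}$ denote minimum and maximum eigenvalues. *)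

From HB Require Import structures.
From mathcomp Require Import all_boot all_order all_algebra.
From mathcomp Require Import all_classical all_reals all_analysis.
Set Implicit Arguments. Unset Strict Implicit. Unset Printing Implicit Defensive.
Import Order.TTheory GRing.Theory Num.Theory.
Import numFieldNormedType.Exports.
Local Open Scope classical_set_scope.
Local Open Scope ring_scope.

Section Defs.
Variable R : realType.

Definition sq_norm {m : nat} (v : 'cV[R]_m) : R := \sum_(i < m) (v i 0) ^+ 2.
Definition enorm {m : nat} (v : 'cV[R]_m) : R := Num.sqrt (sq_norm v).

Definition chi_norm {n p : nat} (e kxt : 'cV[R]_n) (krt : R) (tht : 'cV[R]_p) : R :=
  Num.sqrt (sq_norm e + sq_norm kxt + krt ^+ 2 + sq_norm tht).

Definition sym_posdef {n : nat} (P : 'M[R]_n) : Prop :=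
  P^T = P /\ forall v : 'cV[R]_n, v != 0 -> 0 < (v^T *m P *m v) 0 0.

Definition is_min_eig {n : nat} (M : 'M[R]_n) (l : R) : Prop :=
  eigenvalue M l /\ forall a, eigenvalue M a -> l <= a.
Definition is_max_eig {n : nat} (M : 'M[R]_n) (l : R) : Prop :=
  eigenvalue M l /\ forall a, eigenvalue M a -> a <= l.

(* Hurwitz: every (complex) eigenvalue a + i w of M, with complex eigenvector
   v1 + i v2 != 0, has negative real part a (real and imaginary parts of
   M (v1 + i v2) = (a + i w)(v1 + i v2) written out). *)
Definition hurwitz {n : nat} (M : 'M[R]_n) : Prop :=
  forall (a w : R) (v1 v2 : 'cV[R]_n), (v1 != 0) || (v2 != 0) ->
    M *m v1 = a *: v1 - w *: v2 -> M *m v2 = w *: v1 + a *: v2 -> a < 0.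

Definition loc_lipschitz {n p : nat} (f : 'cV[R]_n -> 'cV[R]_p) : Prop :=
  forall x0 : 'cV[R]_n, exists d L : R, 0 < d /\
    forall y z, enorm (y - x0) < d -> enorm (z - x0) < d ->
      enorm (f y - f z) <= L * enorm (y - z).

Definition bounded_pw_cont (r : R -> R) : Prop :=
  (exists M : R, forall t, `|r t| <= M) /\
  (forall a b : R, exists D : seq R, forall t, a <= t <= b -> t \notin D ->
      {for t, continuous r}) /\
  (forall t : R, cvg (r x @[x --> t^'-]) /\ cvg (r x @[x --> t^'+])).

Definition has_deriv {m k : nat} (f : R -> 'M[R]_(m, k)) (t : R) (df : 'M[R]_(m, k)) : Prop :=
  forall i j, is_derive t (1 : R) (fun s => f s i j) (df i j).

Definition cont_from {m k : nat} (s : R) (f : R -> 'M[R]_(m, k)) : Prop :=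
  forall i j, {within [set t | s <= t], continuous (fun t => f t i j)}.

Definition eta (tq t : R) : R := if t < tq then 0 else 1.

Definition selx (n p : nat) : 'M[R]_(n + 1 + p, n) :=
  \matrix_(i, j) ((i : nat) == (j : nat))%:R.
Definition selc (n p : nat) : 'cV[R]_(n + 1 + p) :=
  \col_i ((i : nat) == n)%:R.
Definition selth (n p : nat) : 'M[R]_(n + 1 + p, p) :=
  \matrix_(i, j) ((i : nat) == (n + 1 + j)%N)%:R.

Definition WT {n p : nat} (A : 'M[R]_n) (b : 'cV[R]_n) (kp : R) (th : 'cV[R]_p)
  : 'M[R]_(n, n + 1 + p) :=
  row_mx (row_mx A (kp *: b)) (kp *: (b *m th^T)).

(* (x, xr, kxh, krh, thh) is a (piecewise-C^1, Caratheodory-type) solution of the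
   closed loop (plant + reference model + controller + adaptive laws) on [s, +oo):
   all signals are continuous on [s, +oo) and the differential equations hold at
   every t > s except at finitely many points in every bounded interval. *)
Definition closed_loop_sol {n p : nat} (A : 'M[R]_n) (b : 'cV[R]_n) (kp kps : R)
  (th : 'cV[R]_p) (phi : 'cV[R]_n -> 'cV[R]_p) (Ar : 'M[R]_n) (br : 'cV[R]_n)
  (r : R -> R) (P : 'M[R]_n) (Ym : R -> 'M[R]_(n, n + 1 + p)) (tq s : R)
  (x xr kxh : R -> 'cV[R]_n) (krh : R -> R) (thh : R -> 'cV[R]_p) : Prop :=
  cont_from s x /\ cont_from s xr /\ cont_from s kxh /\
  cont_from s (fun t => (krh t)%:M : 'M[R]_1) /\ cont_from s thh /\
  forall T : R, exists D : seq R, forall t, s < t -> t < T -> t \notin D ->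
    let e := x t - xr t in
    let sc := (e^T *m P *m b) 0 0 in
    let u := ((kxh t)^T *m x t) 0 0 + krh t * r t - ((thh t)^T *m phi (x t)) 0 0 in
    let Y := Ym t in
    let E1 := Ar - Y *m selx n p - (Y *m selc n p) *m (kxh t)^T in
    let E2 := br - krh t *: (Y *m selc n p) in
    let E3 := Y *m selth n p - (Y *m selc n p) *m (thh t)^T in
    [/\ has_deriv x t (A *m x t + (kp * (u + (th^T *m phi (x t)) 0 0)) *: b),
        has_deriv xr t (Ar *m xr t + r t *: br),
        has_deriv kxh t (- (sc * kps) *: x t + (eta tq t * kps) *: (E1^T *m b)),
        has_deriv (fun t' => (krh t')%:M : 'M[R]_1) t
          ((- (r t * sc * kps) + eta tq t * kps * (E2^T *m b) 0 0)%:M) &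
        has_deriv thh t ((sc * kps) *: phi (x t) + (eta tq t * kps) *: (E3^T *m b))].

End Defs.

From Pilot Require Import Defs.
From HB Require Import structures.
From mathcomp Require Import all_boot all_order all_algebra.
From mathcomp Require Import all_classical all_reals all_analysis.
From mathcomp Require Import ring lra.
Import Order.TTheory GRing.Theory Num.Theory.
Import numFieldNormedType.Exports.
Local Open Scope classical_set_scope.
Local Open Scope ring_scope.
Set Implicit Arguments. Unset Strict Implicit. Unset Printing Implicit Defensive.

(* With e = x - x_r and the parameter errors kx~, kr~, th~,
   take V = e^T P e + |k_p| (|kx~|^2 + kr~^2 + |th~|^2).  Along closed-loop
   solutions the matching conditions and k_p' |k_p| = k_p make the tracking
   terms cancel, so dV/dt = -e^T Q e - eta 2 |k_p|^2 b^T b (|kx~|^2 + kr~^2 + |th~|^2),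
   where the second term comes from the data-driven terms E_1, E_2, E_3, which
   equal (minus) b k_p times the parameter errors once Y_m = W^T.  Rayleigh
   bounds sandwich V between min(lmin P, |k_p|) |chi|^2 and max(lmax P, |k_p|) |chi|^2,
   so dV/dt <= 0 always and dV/dt <= -2 kappa V after t_q; a comparison argument
   on intervals with finitely many exceptional points gives the bounds on |chi|. *)

Section DotProduct.
Variable R : realType.
Implicit Types (m : nat).

Definition dot m (v w : 'cV[R]_m) : R := (v^T *m w) 0 0.

Lemma dotE m (v w : 'cV[R]_m) : dot v w = \sum_i v i 0 * w i 0.
Proof. by rewrite /dot mxE; apply: eq_bigr => i _; rewrite mxE. Qed.

Lemma dotC m (v w : 'cV[R]_m) : dot v w = dot w v.
Proof. by rewrite !dotE; apply: eq_bigr => i _; rewrite mulrC. Qed.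

Lemma dotDr m (u v w : 'cV[R]_m) : dot u (v + w) = dot u v + dot u w.
Proof. by rewrite !dotE -big_split; apply: eq_bigr => i _; rewrite mxE mulrDr. Qed.

Lemma dotZr m a (u v : 'cV[R]_m) : dot u (a *: v) = a * dot u v.
Proof. by rewrite !dotE mulr_sumr; apply: eq_bigr => i _; rewrite mxE mulrCA. Qed.

Lemma dotNr m (u v : 'cV[R]_m) : dot u (- v) = - dot u v.
Proof. by rewrite -scaleN1r dotZr mulN1r. Qed.

Lemma dotBr m (u v w : 'cV[R]_m) : dot u (v - w) = dot u v - dot u w.
Proof. by rewrite dotDr dotNr. Qed.

Lemma dotDl m (u v w : 'cV[R]_m) : dot (v + w) u = dot v u + dot w u.
Proof. by rewrite dotC dotDr !(dotC u). Qed.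

Lemma dotZl m a (u v : 'cV[R]_m) : dot (a *: v) u = a * dot v u.
Proof. by rewrite dotC dotZr dotC. Qed.

Lemma dotNl m (u v : 'cV[R]_m) : dot (- v) u = - dot v u.
Proof. by rewrite dotC dotNr dotC. Qed.

Lemma dotBl m (u v w : 'cV[R]_m) : dot (v - w) u = dot v u - dot w u.
Proof. by rewrite dotDl dotNl. Qed.

Lemma dot0r m (u : 'cV[R]_m) : dot u 0 = 0.
Proof. by rewrite dotE big1 // => i _; rewrite mxE mulr0. Qed.

Lemma dot_trmx m k (M : 'M[R]_(m, k)) u v : dot u (M *m v) = dot (M^T *m u) v.
Proof. by rewrite /dot trmx_mul trmxK mulmxA. Qed.

Lemma mulmx_dot m k (c : 'cV[R]_m) (v w : 'cV[R]_k) : c *m (v^T *m w) = dot v w *: c.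
Proof. by rewrite [v^T *m w]mx11_scalar mul_mx_scalar. Qed.

Lemma sq_normE m (v : 'cV[R]_m) : sq_norm v = dot v v.
Proof. by rewrite /sq_norm dotE; apply: eq_bigr => i _; rewrite expr2. Qed.

Lemma dot_ge0 m (v : 'cV[R]_m) : 0 <= dot v v.
Proof. by rewrite dotE sumr_ge0 // => i _; rewrite -expr2 sqr_ge0. Qed.

Lemma dot_gt0 m (v : 'cV[R]_m) : v != 0 -> 0 < dot v v.
Proof.
move=> v_neq0; rewrite lt_def dot_ge0 andbT; apply: contra v_neq0.
rewrite dotE psumr_eq0 => [/allP v0|i _]; last by rewrite -expr2 sqr_ge0.
apply/eqP/matrixP => i j; rewrite (ord1 j) mxE.
by apply/eqP; rewrite -sqrf_eq0 expr2; exact: v0 (mem_index_enum _).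
Qed.

End DotProduct.

Section QuadraticForms.
Variable R : realType.
Implicit Types (m : nat).

Lemma discriminant_le0 (a b c : R) : 0 <= c ->
  (forall t, 0 <= a + 2 * b * t + c * t ^+ 2) -> b ^+ 2 <= a * c.
Proof.
move=> c_ge0 nonneg; have [c0|c_neq0] := eqVneq c 0.
  subst c; have [->|b_neq0] := eqVneq b 0; first by rewrite expr0n /= mulr0.
  have := nonneg (- (a + 1) / (2 * b)).
  have -> : a + 2 * b * (- (a + 1) / (2 * b)) + 0 * (- (a + 1) / (2 * b)) ^+ 2 = -1.
    by field.
  by lra.
have c_gt0 : 0 < c by rewrite lt_def c_neq0.
have := nonneg (- b / c).
have -> : a + 2 * b * (- b / c) + c * (- b / c) ^+ 2 = (a * c - b ^+ 2) / c by field.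
by rewrite pmulr_lge0 ?invr_gt0 // subr_ge0.
Qed.

Definition qf m (M : 'M[R]_m) v := dot v (M *m v).

Lemma qf0 m (M : 'M[R]_m) : qf M 0 = 0.
Proof. by rewrite /qf mulmx0 dot0r. Qed.

Lemma qfN m (M : 'M[R]_m) v : qf (- M) v = - qf M v.
Proof. by rewrite /qf mulNmx dotNr. Qed.

Lemma qfB_scalar m (M : 'M[R]_m) a v : qf (M - a%:M) v = qf M v - a * dot v v.
Proof. by rewrite /qf mulmxBl mul_scalar_mx dotBr dotZr. Qed.

Lemma qfDZ m (M : 'M[R]_m) w v t : M^T = M ->
  qf M (w + t *: v) = qf M w + 2 * dot w (M *m v) * t + qf M v * t ^+ 2.
Proof.
move=> symM; rewrite /qf mulmxDr -scalemxAr !(dotDl, dotDr, dotZl, dotZr).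
have -> : dot v (M *m w) = dot w (M *m v) by rewrite dot_trmx symM dotC.
ring.
Qed.

Lemma cauchy_schwarz_psd m (M : 'M[R]_m) w v : M^T = M -> (forall u, 0 <= qf M u) ->
  dot w (M *m v) ^+ 2 <= qf M w * qf M v.
Proof. by move=> symM psdM; apply: discriminant_le0 => // t; rewrite -qfDZ. Qed.

Lemma cauchy_schwarz m (w v : 'cV[R]_m) : dot w v ^+ 2 <= dot w w * dot v v.
Proof.
have := @cauchy_schwarz_psd m 1%:M w v (trmx1 _ _).
by rewrite /qf !mul1mx; apply => u; rewrite mul1mx dot_ge0.
Qed.

Lemma mulmx_dot_bound m k (M : 'M[R]_(m, k)) :
  exists2 L, 0 <= L & forall u, dot (M *m u) (M *m u) <= L * dot u u.
Proof.
exists (\sum_i dot (row i M)^T (row i M)^T) => [|u].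
  by apply: sumr_ge0 => i _; exact: dot_ge0.
rewrite mulr_suml dotE; apply: ler_sum => i _.
have -> : (M *m u) i 0 = dot (row i M)^T u by rewrite /dot trmxK -row_mul [in RHS]mxE.
by rewrite -expr2 cauchy_schwarz.
Qed.

Lemma qf_bound m (M : 'M[R]_m) : exists2 L, 0 < L & forall w, `|qf M w| <= L * dot w w.
Proof.
have [L L_ge0 ML] := mulmx_dot_bound M.
exists (L + 1) => [|w]; first lra.
have cs := cauchy_schwarz w (M *m w); have Mw := ML w.
have w_ge0 := dot_ge0 w; have Mw_ge0 := dot_ge0 (M *m w).
have sq : qf M w ^+ 2 <= ((L + 1) * dot w w) ^+ 2.
  by rewrite /qf; apply: (le_trans cs); rewrite exprMn; nra.
rewrite -ler_sqr ?normr_ge0 ?nnegrE ?mulr_ge0 //; last lra.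
by rewrite real_normK // num_real.
Qed.

Lemma psd_unitmx_coercive m (N : 'M[R]_m) : N^T = N -> (forall v, 0 <= qf N v) ->
  N \in unitmx -> exists2 c, 0 < c & forall v, c * dot v v <= qf N v.
Proof.
move=> symN psdN unitN.
have [K K_ge0 invK] := mulmx_dot_bound (invmx N).
have [L L_gt0 NL] := qf_bound N.
have v_le_Nv v : dot v v <= K * dot (N *m v) (N *m v) by have := invK (N *m v); rewrite mulKmx.
(* Cauchy-Schwarz for the semi-inner product of N, applied to N v and v *)
have Nv_le_qf v : dot (N *m v) (N *m v) <= L * qf N v.
  have cs := cauchy_schwarz_psd (N *m v) v symN psdN.
  have := NL (N *m v); rewrite ler_norml => /andP[_ qNv].
  have := psdN v; have := dot_ge0 (N *m v).
  move: (dot _ _) (qf N (N *m v)) (qf N v) qNv cs => d q2 q qNv cs d_ge0 q_ge0.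
  have [->|d_neq0] := eqVneq d 0; first by rewrite mulr_ge0 // ltW.
  have d_gt0 : 0 < d by rewrite lt_def d_neq0.
  rewrite -(ler_pM2l d_gt0) -expr2 (le_trans cs) // mulrCA mulrA.
  by rewrite ler_wpM2r // mulrC.
exists (K * L + 1)^-1 => [|v]; first by rewrite invr_gt0; nra.
rewrite mulrC ler_pdivrMr; last nra.
by have := v_le_Nv v; have := Nv_le_qf v; have := psdN v; have := dot_ge0 (N *m v); nra.
Qed.

Lemma rayleigh_inf_eigenvalue m (M : 'M[R]_m) (v0 : 'cV[R]_m) : M^T = M -> v0 != 0 ->
  exists2 mu, eigenvalue M mu & forall v, mu * dot v v <= qf M v.
Proof.
move=> symM v0_neq0.
pose S := [set qf M v / dot v v | v in [set v : 'cV[R]_m | v != 0]].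
have [L _ ML] := qf_bound M.
have S_lb : lbound S (- L).
  move=> _ [v v_neq0 <-]; rewrite ler_pdivlMr ?dot_gt0 // mulNr.
  by have := ML v; rewrite ler_norml => /andP[].
have S_neq0 : S !=set0 by exists (qf M v0 / dot v0 v0), v0.
pose mu := inf S.
have mu_lb v : mu * dot v v <= qf M v.
  have [->|v_neq0] := eqVneq v 0; first by rewrite qf0 dot0r mulr0.
  rewrite -ler_pdivlMr ?dot_gt0 //; apply: ge_inf; first by exists (- L).
  by exists v.
exists mu => //; apply/eigenvalueP.
suff /det0P[v v_neq0 /eqP] : \det (mu%:M - M) == 0.
  by rewrite mulmxBr mul_mx_scalar subr_eq0 => /eqP Mv; exists v.
apply/negPn/negP; rewrite -unitfE -unitmxE => unit_muM.
have symN : (M - mu%:M)^T = M - mu%:M by rewrite linearB /= symM tr_scalar_mx.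
have psdN v : 0 <= qf (M - mu%:M) v by rewrite qfB_scalar subr_ge0.
have unitN : M - mu%:M \in unitmx by rewrite -[M - _]opprB -scaleN1r unitmxZ // unitrN1.
(* coercivity of M - mu would make mu + c a larger lower bound of S *)
have [c c_gt0 coerc] := psd_unitmx_coercive symN psdN unitN.
suff : mu + c <= mu by lra.
apply: lb_le_inf => // _ [v v_neq0 <-]; rewrite ler_pdivlMr ?dot_gt0 //.
by have := coerc v; rewrite qfB_scalar; lra.
Qed.

Lemma rayleigh_min m (M : 'M[R]_m) l : M^T = M -> is_min_eig M l ->
  forall v, l * dot v v <= qf M v.
Proof.
move=> symM [/eigenvalueP[v0 _ v0_neq0] l_min] v.
have v0T_neq0 : v0^T != 0 by rewrite trmx_eq0.
have [mu mu_eig mu_lb] := rayleigh_inf_eigenvalue symM v0T_neq0.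
by apply: le_trans (mu_lb v); rewrite ler_wpM2r ?dot_ge0 ?l_min.
Qed.

Lemma eigenvalueN m (M : 'M[R]_m) a : eigenvalue (- M) a = eigenvalue M (- a).
Proof.
apply/eigenvalueP/eigenvalueP => -[v Mv v_neq0]; exists v => //.
  by rewrite scaleNr -Mv mulmxN opprK.
by rewrite mulmxN Mv scaleNr opprK.
Qed.

Lemma rayleigh_max m (M : 'M[R]_m) l : M^T = M -> is_max_eig M l ->
  forall v, qf M v <= l * dot v v.
Proof.
move=> symM [l_eig l_max] v.
have min_opp : is_min_eig (- M) (- l).
  split=> [|a]; first by rewrite eigenvalueN opprK.
  by rewrite eigenvalueN => /l_max; rewrite lerNl.
have := rayleigh_min (M := - M) _ min_opp v.
by rewrite qfN mulNr lerN2; apply; rewrite linearN /= symM.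
Qed.

Lemma min_eig_gt0 m (M : 'M[R]_m) l : sym_posdef M -> is_min_eig M l -> 0 < l.
Proof.
move=> [_ posM] [/eigenvalueP[v Mv v_neq0] _].
have vT_neq0 : v^T != 0 by rewrite trmx_eq0.
have := dot_gt0 vT_neq0; rewrite /dot trmxK => vv_gt0.
by have := posM _ vT_neq0; rewrite trmxK Mv -scalemxAl mxE pmulr_lgt0.
Qed.

End QuadraticForms.

Section MatrixDerivatives.
Variable R : realType.
Implicit Types (m k l : nat) (t : R).

Lemma is_derive_mul (f g : R -> R) t df dg : is_derive t 1 f df -> is_derive t 1 g dg ->
  is_derive t 1 (fun s => f s * g s) (df * g t + f t * dg).
Proof.
move=> f' g'; have -> : df * g t + f t * dg = f t *: dg + g t *: df.
  by rewrite addrC [df * _]mulrC.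
exact: is_deriveM.
Qed.

Lemma has_derivB m k (f g : R -> 'M[R]_(m, k)) t df dg :
  has_deriv f t df -> has_deriv g t dg -> has_deriv (fun s => f s - g s) t (df - dg).
Proof.
move=> f' g' i j; rewrite !mxE.
have -> : (fun s => (f s - g s) i j) = (fun s => f s i j - g s i j).
  by apply/funext => s; rewrite !mxE.
exact: is_deriveB.
Qed.

Lemma has_deriv_cst m k (C : 'M[R]_(m, k)) t : has_deriv (fun _ => C) t 0.
Proof. by move=> i j; rewrite mxE; exact: is_derive_cst. Qed.

Lemma has_deriv_trmx m k (f : R -> 'M[R]_(m, k)) t df :
  has_deriv f t df -> has_deriv (fun s => (f s)^T) t df^T.
Proof.
move=> f' i j; rewrite mxE.
by have -> : (fun s => (f s)^T i j) = (fun s => f s j i) by apply/funext => s; rewrite mxE.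
Qed.

Lemma has_deriv_mulmx m k l (f : R -> 'M[R]_(m, k)) (g : R -> 'M[R]_(k, l)) t df dg :
  has_deriv f t df -> has_deriv g t dg ->
  has_deriv (fun s => f s *m g s) t (df *m g t + f t *m dg).
Proof.
move=> f' g' i j; rewrite !mxE -big_split /=.
have -> : (fun s => (f s *m g s) i j) = \sum_(h < k) (fun s => f s i h * g s h j).
  by apply/funext => s; rewrite mxE fct_sumE.
by apply: is_derive_sum => h; exact: is_derive_mul.
Qed.

Lemma is_derive_dot m (f g : R -> 'cV[R]_m) t df dg :
  has_deriv f t df -> has_deriv g t dg ->
  is_derive t 1 (fun s => dot (f s) (g s)) (dot df (g t) + dot (f t) dg).
Proof.
by move=> f' g'; have := has_deriv_mulmx (has_deriv_trmx f') g' 0 0; rewrite mxE.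
Qed.

Lemma is_derive_scalar_mx (f : R -> R) t d :
  has_deriv (fun s => (f s)%:M : 'M[R]_1) t d%:M -> is_derive t 1 f d.
Proof.
move=> /(_ 0 0); rewrite mxE eqxx mulr1n.
by have -> : (fun s => ((f s)%:M : 'M[R]_1) 0 0) = f by apply/funext => s; rewrite mxE eqxx mulr1n.
Qed.

End MatrixDerivatives.

Section ContinuityWithin.
Variables (R : realType) (A : set R).
Implicit Types (m k l : nat).

Definition mx_continuous_within m k (f : R -> 'M[R]_(m, k)) :=
  forall i j, {within A, continuous (fun t => f t i j)}.

Lemma within_continuous_sum n (F : 'I_n -> R -> R) :
  (forall i, {within A, continuous F i}) ->
  {within A, continuous (fun t => \sum_(i < n) F i t)}.
Proof.
move=> F_cont; have -> : (fun t => \sum_(i < n) F i t) = \sum_(i < n) F i.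
  by apply/funext => t; rewrite fct_sumE.
elim/big_ind: _ => // [x|f g f_cont g_cont x]; first exact: cst_continuous.
exact: continuousD (f_cont x) (g_cont x).
Qed.

Lemma mx_continuous_mulmx m k l (f : R -> 'M[R]_(m, k)) (g : R -> 'M[R]_(k, l)) :
  mx_continuous_within f -> mx_continuous_within g ->
  mx_continuous_within (fun t => f t *m g t).
Proof.
move=> f_cont g_cont i j.
have -> : (fun t => (f t *m g t) i j) = (fun t => \sum_h f t i h * g t h j).
  by apply/funext => t; rewrite mxE.
by apply: within_continuous_sum => h x; apply: continuousM (f_cont i h x) (g_cont h j x).
Qed.

Lemma mx_continuousB m k (f g : R -> 'M[R]_(m, k)) :
  mx_continuous_within f -> mx_continuous_within g ->
  mx_continuous_within (fun t => f t - g t).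
Proof.
move=> f_cont g_cont i j.
have -> : (fun t => (f t - g t) i j) = (fun t => f t i j - g t i j).
  by apply/funext => t; rewrite !mxE.
by move=> x; apply: continuousB (f_cont i j x) (g_cont i j x).
Qed.

Lemma mx_continuous_cst m k (C : 'M[R]_(m, k)) : mx_continuous_within (fun _ => C).
Proof. by move=> i j x; exact: cst_continuous. Qed.

Lemma within_continuous_dot m (f g : R -> 'cV[R]_m) :
  mx_continuous_within f -> mx_continuous_within g ->
  {within A, continuous (fun t => dot (f t) (g t))}.
Proof.
move=> f_cont g_cont.
have fT_cont : mx_continuous_within (fun t => (f t)^T).
  by move=> i j; have -> : (fun t => (f t)^T i j) = (fun t => f t j i)
    by apply/funext => t; rewrite mxE.
exact: mx_continuous_mulmx fT_cont g_cont 0 0.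
Qed.

Lemma within_continuous_scalar_mx (f : R -> R) :
  mx_continuous_within (fun t => (f t)%:M : 'M[R]_1) -> {within A, continuous f}.
Proof.
move=> /(_ 0 0).
by have -> : (fun t => ((f t)%:M : 'M[R]_1) 0 0) = f by apply/funext => t; rewrite mxE eqxx mulr1n.
Qed.

End ContinuityWithin.

Section Comparison.
Variable R : realType.

Lemma ler0_pw_derive_le (f : R -> R) (D : seq R) a b : a <= b ->
  {within `[a, b], continuous f} ->
  (forall t, a < t < b -> t \notin D -> exists2 d, is_derive t 1 f d & d <= 0) ->
  f b <= f a.
Proof.
elim: D a b => [|d D IH] a b ab f_cont f'.
  have f'_ex t : t \in `]a, b[ -> exists2 d, is_derive t 1 f d & d <= 0.
    by rewrite in_itv /= => /f'; apply.
  apply: (@ler0_derive1_le_cc R f a b) => //; rewrite ?in_itv /= ?lexx ?ab //.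
  - by move=> t /f'_ex[d' f'd _].
  - by move=> t /f'_ex[d' f'd d'_le0]; rewrite derive1E derive_val.
(* split [a, b] at the exceptional point d when it lies inside *)
have sub_ab u v : a <= u -> v <= b -> {within `[u, v], continuous f}.
  move=> au vb; apply: continuous_subspaceW f_cont.
  by apply: subset_itv; rewrite bnd_simp.
have [/andP[ad db]|d_out] := boolP (a < d < b).
  apply: (@le_trans _ _ (f d)).
    apply: IH; [exact: ltW | exact: sub_ab (ltW ad) _ |].
    move=> t /andP[dt tb] tD; apply: f'; first by rewrite (lt_trans ad dt).
    by rewrite in_cons negb_or tD andbT gt_eqF.
  apply: IH; [exact: ltW | exact: sub_ab _ (ltW db) |].
  move=> t /andP[at1 td] tD; apply: f'; first by rewrite at1 (lt_trans td db).
  by rewrite in_cons negb_or tD andbT lt_eqF.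
apply: IH => // t tab tD; apply: f' => //.
by rewrite in_cons negb_or tD andbT; apply: contraNneq d_out => <-.
Qed.

Lemma pw_derive_expR_decay (V : R -> R) (D : seq R) (a b c : R) : a <= b ->
  {within `[a, b], continuous V} ->
  (forall t, a < t < b -> t \notin D -> exists2 d, is_derive t 1 V d & d <= - c * V t) ->
  V b <= expR (- c * (b - a)) * V a.
Proof.
move=> ab V_cont V'.
pose E s := expR (c * s).
have E' (t : R) : is_derive t 1 E (c * E t).
  have -> : c * E t = expR (c * t) * (c *: (1 : R)) by rewrite /E mulrC [c *: _]mulr1.
  exact: is_derive1_comp (is_derive_expR (c * t)) (is_deriveZ c (is_derive_id t (1 : R))).
have E_cont : continuous E.
  by move=> x; apply/differentiable_continuous/derivable1_diffP; have [] := E' x.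
(* V e^{c t} is nonincreasing *)
have VE_le : V b * E b <= V a * E a.
  apply: (ler0_pw_derive_le (f := fun s => V s * E s) (D := D) ab).
    by move=> x; apply: continuousM; [exact: V_cont | exact: continuous_subspaceT].
  move=> t tab tD; have [d V'd d_le] := V' t tab tD.
  exists (d * E t + V t * (c * E t)); first exact: is_derive_mul.
  by have := expR_gt0 (c * t); rewrite -/(E t); nra.
have Ea : E a = expR (- c * (b - a)) * E b by rewrite /E -expRD; congr expR; ring.
by move: VE_le; rewrite Ea; have := expR_gt0 (c * b); rewrite -/(E b); nra.
Qed.

End Comparison.

Section SelectionMatrices.
Variables (R : realType) (n p : nat).
Variables (A : 'M[R]_n) (b : 'cV[R]_n) (kp : R) (th : 'cV[R]_p).

Lemma sum_natr_delta N (F : 'I_N -> R) (k0 : 'I_N) m : (k0 : nat) = m ->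
  \sum_k F k * ((k : nat) == m)%:R = F k0.
Proof.
move=> k0m; rewrite (bigD1 k0) //= k0m eqxx mulr1 big1 ?addr0 // => k k_neq.
suff /negbTE-> : (k : nat) != m by rewrite mulr0.
by apply: contraNneq k_neq => km; apply/eqP/val_inj; rewrite /= km.
Qed.

Lemma WT_selx : WT A b kp th *m selx R n p = A.
Proof.
apply/matrixP => i j; rewrite mxE.
under eq_bigr do rewrite [selx _ _ _ _ _]mxE.
by rewrite (@sum_natr_delta _ _ (lshift p (lshift 1 j))) // /WT !row_mxEl.
Qed.

Lemma WT_selc : WT A b kp th *m selc R n p = kp *: b.
Proof.
apply/matrixP => i j; rewrite (ord1 j) mxE.
under eq_bigr do rewrite [selc _ _ _ _ _]mxE.
rewrite (@sum_natr_delta _ _ (lshift p (rshift n (0 : 'I_1)))) /=; last by rewrite addn0.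
by rewrite /WT row_mxEl row_mxEr.
Qed.

Lemma WT_selth : WT A b kp th *m selth R n p = kp *: (b *m th^T).
Proof.
apply/matrixP => i j; rewrite mxE.
under eq_bigr do rewrite [selth _ _ _ _ _]mxE.
by rewrite (@sum_natr_delta _ _ (rshift (n + 1) j)) // /WT row_mxEr.
Qed.

End SelectionMatrices.

Section LyapunovFunction.
Variables (R : realType) (n p : nat) (P : 'M[R]_n) (a : R).
Hypothesis symP : P^T = P.

Definition param_err (kxt : 'cV[R]_n) (krt : R) (tht : 'cV[R]_p) :=
  dot kxt kxt + krt ^+ 2 + dot tht tht.

Definition lyap (e kxt : 'cV[R]_n) (krt : R) (tht : 'cV[R]_p) :=
  qf P e + a * param_err kxt krt tht.

Lemma param_err_ge0 kxt krt tht : 0 <= param_err kxt krt tht.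
Proof. by rewrite /param_err !addr_ge0 ?dot_ge0 ?sqr_ge0. Qed.

Lemma chi_normE e kxt krt tht :
  chi_norm e kxt krt tht = Num.sqrt (dot e e + param_err kxt krt tht).
Proof. by rewrite /chi_norm !sq_normE /param_err !addrA. Qed.

Lemma is_derive_lyap (e kxt : R -> 'cV[R]_n) (krt : R -> R) (tht : R -> 'cV[R]_p)
    t de dkx dkr dth :
  has_deriv e t de -> has_deriv kxt t dkx -> is_derive t 1 krt dkr ->
  has_deriv tht t dth ->
  is_derive t 1 (fun s => lyap (e s) (kxt s) (krt s) (tht s))
    (2 * dot (P *m e t) de +
     2 * a * (dot (kxt t) dkx + krt t * dkr + dot (tht t) dth)).
Proof.
move=> e' kxt' krt' tht'.
have Pe' := has_deriv_mulmx (has_deriv_cst P t) e'.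
have param_err' := is_deriveD (is_deriveD (is_derive_dot kxt' kxt')
  (is_deriveX 2 krt')) (is_derive_dot tht' tht').
apply: is_derive_eq (is_deriveD (is_derive_dot e' Pe') (is_deriveZ a param_err')) _.
have scaleE (x y : R) : x *: y = x * y by [].
rewrite mul0mx add0r [dot (e t) _]dot_trmx symP (dotC de) !(dotC dkx) !(dotC dth).
by rewrite !scaleE expr1; ring.
Qed.

Section EigenvalueBounds.
Variables (lmin lmax : R).
Hypotheses (minP : is_min_eig P lmin) (maxP : is_max_eig P lmax) (a_gt0 : 0 < a).

Lemma lyap_bounds e kxt krt tht :
  Num.min lmin a * (dot e e + param_err kxt krt tht) <= lyap e kxt krt tht <=
  Num.max lmax a * (dot e e + param_err kxt krt tht).
Proof.
have := rayleigh_min symP minP e; have := rayleigh_max symP maxP e.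
have := dot_ge0 e; have := param_err_ge0 kxt krt tht.
have : Num.min lmin a <= lmin by rewrite ge_min lexx.
have : Num.min lmin a <= a by rewrite ge_min lexx orbT.
have : lmax <= Num.max lmax a by rewrite le_max lexx.
have : a <= Num.max lmax a by rewrite le_max lexx orbT.
by rewrite /lyap; move: (Num.min _ _) (Num.max _ _) => m M; nra.
Qed.

Lemma chi_norm_le_lyap e1 kxt1 krt1 tht1 e2 kxt2 krt2 tht2 (E : R) : 0 < lmin -> 0 <= E ->
  lyap e2 kxt2 krt2 tht2 <= E ^+ 2 * lyap e1 kxt1 krt1 tht1 ->
  chi_norm e2 kxt2 krt2 tht2 <=
    Num.sqrt (Num.max lmax a / Num.min lmin a) * E * chi_norm e1 kxt1 krt1 tht1.
Proof.
move=> lmin_gt0 E_ge0 lyap_le; rewrite !chi_normE.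
have /andP[lb2 _] := lyap_bounds e2 kxt2 krt2 tht2.
have /andP[_ ub1] := lyap_bounds e1 kxt1 krt1 tht1.
have S1_ge0 : 0 <= dot e1 e1 + param_err kxt1 krt1 tht1.
  by rewrite addr_ge0 ?dot_ge0 ?param_err_ge0.
have m_gt0 : 0 < Num.min lmin a by rewrite lt_min lmin_gt0.
have M_gt0 : 0 < Num.max lmax a by rewrite lt_max a_gt0 orbT.
move: (Num.min _ _) (Num.max _ _) m_gt0 M_gt0 lb2 ub1 => m M m_gt0 M_gt0 lb2 ub1.
move: (dot e1 e1 + _) (dot e2 e2 + _) S1_ge0 lb2 ub1 => S1 S2 S1_ge0 lb2 ub1.
have E2_ge0 : 0 <= E ^+ 2 by rewrite sqr_ge0.
have M_m_ge0 : 0 <= M / m by rewrite divr_ge0 // ltW.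
have ME_ge0 : 0 <= M / m * E ^+ 2 by rewrite mulr_ge0.
rewrite -[E]ger0_norm // -sqrtr_sqr -!sqrtrM // ler_sqrt; last by rewrite mulr_ge0.
rewrite -(ler_pM2l m_gt0).
have -> : m * (M / m * E ^+ 2 * S1) = M * (E ^+ 2 * S1) by field; rewrite gt_eqF.
nra.
Qed.

End EigenvalueBounds.
End LyapunovFunction.

Section ClosedLoop.
Variables (R : realType) (n p : nat).
Variables (A : 'M[R]_n) (b : 'cV[R]_n) (kp kps : R) (th : 'cV[R]_p).
Variables (Ar P Q : 'M[R]_n) (br kx : 'cV[R]_n) (kr : R).
Hypotheses (kp_neq0 : kp != 0) (kps_sg : kps = Num.sg kp) (symP : P^T = P)
  (lyapPQ : Ar^T *m P + P *m Ar + Q = 0) (matchA : A + kp *: (b *m kx^T) = Ar)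
  (matchb : (kp * kr) *: b = br).

Lemma qf_lyap_eq e : qf Q e = - (2 * dot (P *m e) (Ar *m e)).
Proof.
have -> : Q = - (Ar^T *m P + P *m Ar).
  by rewrite -[LHS](addKr (Ar^T *m P + P *m Ar)) lyapPQ addr0.
have ArP : dot e (Ar^T *m P *m e) = dot (P *m e) (Ar *m e).
  by rewrite -mulmxA dot_trmx trmxK dotC.
have PAr : dot e (P *m Ar *m e) = dot (P *m e) (Ar *m e).
  by rewrite -mulmxA dot_trmx symP.
by rewrite /qf mulNmx mulmxDl dotNr dotDr ArP PAr; ring.
Qed.

Lemma tracking_error_rate (x xr : 'cV[R]_n) (c r0 : R) :
  2 * dot (P *m (x - xr)) (A *m x + c *: b - (Ar *m xr + r0 *: br)) =
  - qf Q (x - xr) + 2 * dot (P *m (x - xr)) b * (c - kp * dot kx x - r0 * kp * kr).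
Proof.
have -> : A = Ar - kp *: (b *m kx^T) by rewrite -matchA addrK.
rewrite qf_lyap_eq -matchb mulmxBl -scalemxAl -mulmxA mulmx_dot.
by rewrite !(dotDr, dotBr, dotZr, dotNr) [Ar *m (x - xr)]mulmxBr dotBr; ring.
Qed.

Lemma estimation_error_rate (kxh : 'cV[R]_n) (krh : R) (thh : 'cV[R]_p)
    (Y : 'M[R]_(n, n + 1 + p)) : Y = WT A b kp th ->
  dot (kxh - kx) ((Ar - Y *m selx R n p - (Y *m selc R n p) *m kxh^T)^T *m b) +
  (krh - kr) * ((br - krh *: (Y *m selc R n p))^T *m b) 0 0 +
  dot (thh - th) ((Y *m selth R n p - (Y *m selc R n p) *m thh^T)^T *m b) =
  - kp * dot b b * param_err (kxh - kx) (krh - kr) (thh - th).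
Proof.
move=> ->; rewrite WT_selx WT_selc WT_selth -/(dot _ b) !dot_trmx !trmxK.
have -> : Ar - A = kp *: (b *m kx^T) by rewrite -matchA addrC addKr.
rewrite -matchb scalerA -scalerBl -!scalemxAl -!scalerBr -!mulmxBr -!scalemxAl -!mulmxA.
rewrite -!linearB /= !mulmx_dot !dotZl -(opprB kxh) -(opprB thh) !dotNl.
by rewrite /param_err; ring.
Qed.

Lemma lyap_rate (x xr kxh : 'cV[R]_n) (krh r0 et : R) (thh ph : 'cV[R]_p)
    (Y : 'M[R]_(n, n + 1 + p)) :
  (et != 0 -> Y = WT A b kp th) ->
  let e := x - xr in
  let sc := (e^T *m P *m b) 0 0 in
  let u := (kxh^T *m x) 0 0 + krh * r0 - (thh^T *m ph) 0 0 in
  let E1 := Ar - Y *m selx R n p - (Y *m selc R n p) *m kxh^T in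
  let E2 := br - krh *: (Y *m selc R n p) in
  let E3 := Y *m selth R n p - (Y *m selc R n p) *m thh^T in
  2 * dot (P *m e) (A *m x + (kp * (u + (th^T *m ph) 0 0)) *: b - (Ar *m xr + r0 *: br)) +
  2 * `|kp| * (dot (kxh - kx) (- (sc * kps) *: x + (et * kps) *: (E1^T *m b)) +
               (krh - kr) * (- (r0 * sc * kps) + et * kps * (E2^T *m b) 0 0) +
               dot (thh - th) ((sc * kps) *: ph + (et * kps) *: (E3^T *m b)))
  = - qf Q e - et * (2 * `|kp| ^+ 2 * dot b b) * param_err (kxh - kx) (krh - kr) (thh - th).
Proof.
move=> YE e sc u E1 E2 E3.
have scE : sc = dot (P *m e) b by rewrite /sc /dot trmx_mul symP.
have est : et * (dot (kxh - kx) (E1^T *m b) + (krh - kr) * (E2^T *m b) 0 0 +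
                 dot (thh - th) (E3^T *m b)) =
           et * (- kp * dot b b * param_err (kxh - kx) (krh - kr) (thh - th)).
  have [->|/YE YWT] := eqVneq et 0; first by rewrite !mul0r.
  by rewrite estimation_error_rate.
have kps_cases : (kps = 1 /\ `|kp| = kp) \/ (kps = -1 /\ `|kp| = - kp).
  rewrite kps_sg; case: (ltgtP kp 0) => [kp_lt0|kp_gt0|kp0].
  - by right; rewrite ltr0_sg // ltr0_norm.
  - by left; rewrite gtr0_sg // gtr0_norm.
  - by move: kp_neq0; rewrite kp0 eqxx.
apply: (@eq_trans _ _ (- qf Q e + 2 * `|kp| * kps * (et *
    (dot (kxh - kx) (E1^T *m b) + (krh - kr) * (E2^T *m b) 0 0 + dot (thh - th) (E3^T *m b))))).
  rewrite tracking_error_rate -scE /u -/(dot kxh x) -/(dot thh ph) -/(dot th ph).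
  rewrite !(dotDr, dotZr, dotNr) [dot (kxh - kx) x]dotBl [dot (thh - th) ph]dotBl.
  by case: kps_cases => -[-> ->]; ring.
by rewrite est /param_err; case: kps_cases => -[-> ->]; ring.
Qed.

Section Trajectories.
Variables (phi : 'cV[R]_n -> 'cV[R]_p) (r : R -> R) (Ym : R -> 'M[R]_(n, n + 1 + p)) (tq : R).
Hypothesis YmE : forall t, tq <= t -> Ym t = WT A b kp th.

Let sol := closed_loop_sol A b kp kps th phi Ar br r P Ym tq.
Let lyap_traj (x xr kxh : R -> 'cV[R]_n) krh (thh : R -> 'cV[R]_p) t :=
  lyap P `|kp| (x t - xr t) (kxh t - kx) (krh t - kr) (thh t - th).

Lemma closed_loop_lyap_deriv s x xr kxh krh thh : sol s x xr kxh krh thh ->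
  forall T, exists D : seq R, forall t, s < t -> t < T -> t \notin D ->
    is_derive t 1 (lyap_traj x xr kxh krh thh)
      (- qf Q (x t - xr t) - Defs.eta tq t * (2 * `|kp| ^+ 2 * dot b b) *
         param_err (kxh t - kx) (krh t - kr) (thh t - th)).
Proof.
move=> [_ [_ [_ [_ [_ sol']]]]] T; have [D D_sol] := sol' T.
exists D => t st tT tD; have [x' xr' kxh' krh' thh'] := D_sol t st tT tD.
have e' := has_derivB x' xr'.
have kxt' := has_derivB kxh' (has_deriv_cst kx t).
have krt' : is_derive t 1 (fun s => krh s - kr) _ :=
  is_deriveB (is_derive_scalar_mx krh') (is_derive_cst kr t 1).
have tht' := has_derivB thh' (has_deriv_cst th t).
apply: is_derive_eq (is_derive_lyap `|kp| symP e' kxt' krt' tht') _.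
rewrite !subr0; apply: lyap_rate => eta_neq0; apply: YmE.
by move: eta_neq0; rewrite /Defs.eta; case: ltP => // _; rewrite eqxx.
Qed.

Lemma closed_loop_lyap_cont s x xr kxh krh thh : sol s x xr kxh krh thh ->
  {within [set t | s <= t], continuous lyap_traj x xr kxh krh thh}.
Proof.
move=> [x_c [xr_c [kxh_c [krh_c [thh_c _]]]]].
pose S := [set t : R | s <= t].
have e_c := mx_continuousB x_c xr_c.
have kxt_c := mx_continuousB kxh_c (mx_continuous_cst (A := S) (C := kx)).
have tht_c := mx_continuousB thh_c (mx_continuous_cst (A := S) (C := th)).
have krt_c : {within S, continuous (fun t => krh t - kr)}.
  have krh_c' := within_continuous_scalar_mx krh_c.
  by move=> t; have := continuousB (krh_c' t) (@cst_continuous (subspace S) _ kr t).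
have Pe_c := mx_continuous_mulmx (mx_continuous_cst (A := S) (C := P)) e_c.
have pe_c : {within S, continuous (fun t => param_err (kxh t - kx) (krh t - kr) (thh t - th))}.
  by move=> t; have := continuousD (continuousD (within_continuous_dot (x := t) kxt_c kxt_c)
    (continuousM (krt_c t) (krt_c t))) (within_continuous_dot (x := t) tht_c tht_c).
by move=> t; have := continuousD (within_continuous_dot (x := t) e_c Pe_c)
  (continuousM (@cst_continuous (subspace S) _ `|kp| t) (pe_c t)).
Qed.

Section DecayRates.
Variables (lminP lmaxP lminQ : R).
Hypotheses (bb_gt0 : 0 < dot b b) (minP : is_min_eig P lminP)
  (maxP : is_max_eig P lmaxP) (minQ : is_min_eig Q lminQ)
  (lminP_gt0 : 0 < lminP) (lminQ_gt0 : 0 < lminQ) (symQ : Q^T = Q).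

Let mu := Num.min lminQ (2 * `|kp| ^+ 2 * dot b b).
Let M := Num.max lmaxP `|kp|.

Let kp_gt0 : 0 < `|kp|. Proof. by rewrite normr_gt0. Qed.
Let mu_gt0 : 0 < mu. Proof. by rewrite lt_min lminQ_gt0 !mulr_gt0 // exprn_gt0. Qed.
Let M_gt0 : 0 < M. Proof. by rewrite lt_max kp_gt0 orbT. Qed.

Lemma lyap_rate_le (e kxt : 'cV[R]_n) (krt : R) (tht : 'cV[R]_p) (et c : R) :
  (0 <= et /\ c = 0) \/ (et = 1 /\ c = mu / M) ->
  - qf Q e - et * (2 * `|kp| ^+ 2 * dot b b) * param_err kxt krt tht <=
  - c * lyap P `|kp| e kxt krt tht.
Proof.
have Qe := rayleigh_min symQ minQ e; have e_ge0 := dot_ge0 e.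
have pe_ge0 := param_err_ge0 kxt krt tht.
have kb_ge0 : 0 <= 2 * `|kp| ^+ 2 * dot b b by rewrite !mulr_ge0 // ltW.
case=> [[et_ge0 ->]|[-> ->]].
  have := mulr_ge0 (mulr_ge0 et_ge0 kb_ge0) pe_ge0.
  by have := mulr_ge0 (ltW lminQ_gt0) e_ge0; rewrite oppr0 mul0r; lra.
have /andP[_ lyap_le] := lyap_bounds `|kp| symP minP maxP e kxt krt tht.
have mu_le1 : mu <= lminQ by rewrite ge_min lexx.
have mu_le2 : mu <= 2 * `|kp| ^+ 2 * dot b b by rewrite ge_min lexx orbT.
have : mu / M * lyap P `|kp| e kxt krt tht <= mu * (dot e e + param_err kxt krt tht).
  by rewrite mulrAC ler_pdivrMr // -mulrA ler_pM2l // mulrC.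
have := ler_wpM2r e_ge0 mu_le1; have := ler_wpM2r pe_ge0 mu_le2.
by rewrite mulNr mul1r; lra.
Qed.

Lemma closed_loop_lyap_decay s x xr kxh krh thh c t1 t2 : sol s x xr kxh krh thh ->
  s <= t1 -> t1 <= t2 -> c = 0 \/ (c = mu / M /\ tq <= t1) ->
  lyap_traj x xr kxh krh thh t2 <= expR (- c * (t2 - t1)) * lyap_traj x xr kxh krh thh t1.
Proof.
move=> sol_s st1 t12 c_cases.
have [D lyap'] := closed_loop_lyap_deriv sol_s (t2 + 1).
apply: (pw_derive_expR_decay (D := D) t12).
  apply: continuous_subspaceW (closed_loop_lyap_cont sol_s).
  by move=> u /=; rewrite in_itv /= => /andP[t1u _]; exact: le_trans st1 t1u.
move=> t /andP[t1t tt2] tD; eexists.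
  by apply: lyap' tD; [exact: le_lt_trans st1 t1t | rewrite (lt_trans tt2) ?ltrDl].
apply: lyap_rate_le; rewrite /Defs.eta.
case: c_cases => [->|[-> tq_t1]]; [left | right]; first by case: ifP.
by rewrite ltNge (le_trans tq_t1 (ltW t1t)).
Qed.

Lemma closed_loop_chi_bound s x xr kxh krh thh lam t0 t1 t2 : sol s x xr kxh krh thh ->
  s <= t0 -> t0 <= t1 -> t1 <= t2 -> lam = 0 \/ (2 * lam = mu / M /\ tq <= t1) ->
  chi_norm (x t2 - xr t2) (kxh t2 - kx) (krh t2 - kr) (thh t2 - th) <=
  Num.sqrt (M / Num.min lminP `|kp|) * expR (- lam * (t2 - t1)) *
    chi_norm (x t0 - xr t0) (kxh t0 - kx) (krh t0 - kr) (thh t0 - th).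
Proof.
move=> sol_s st0 t01 t12 lam_cases.
apply: (chi_norm_le_lyap symP minP maxP kp_gt0 lminP_gt0 (expR_ge0 _)).
rewrite expr2 -expRD.
rewrite (_ : - lam * (t2 - t1) + - lam * (t2 - t1) = - (2 * lam) * (t2 - t1)); last by ring.
have c_cases : 2 * lam = 0 \/ (2 * lam = mu / M /\ tq <= t1).
  by case: lam_cases => [->|]; [left; rewrite mulr0 | right].
apply: le_trans (closed_loop_lyap_decay sol_s (le_trans st0 t01) t12 c_cases) _.
rewrite ler_wpM2l ?expR_ge0 //.
have := closed_loop_lyap_decay sol_s st0 t01 (or_introl erefl).
by rewrite oppr0 mul0r expR0 mul1r.
Qed.

End DecayRates.

End Trajectories.

End ClosedLoop.

Unset Implicit Arguments.
Set Strict Implicit.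

Theorem theorem1 (R : realType) (n p : nat)
  (A : 'M[R]_n) (b : 'cV[R]_n) (kp kps : R) (th : 'cV[R]_p)
  (phi : 'cV[R]_n -> 'cV[R]_p) (Ar : 'M[R]_n) (br : 'cV[R]_n) (r : R -> R)
  (P Q : 'M[R]_n) (kx : 'cV[R]_n) (kr : R) (t0 tq : R)
  (Ym : R -> 'M[R]_(n, n + 1 + p)) (lminP lmaxP lminQ : R) :
  0 < (b^T *m b) 0 0 ->
  kp != 0 ->
  kps = Num.sg kp ->
  loc_lipschitz phi ->
  hurwitz Ar ->
  bounded_pw_cont r ->
  sym_posdef P -> sym_posdef Q ->
  Ar^T *m P + P *m Ar + Q = 0 ->
  A + kp *: (b *m kx^T) = Ar ->
  (kp * kr) *: b = br ->
  t0 < tq ->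
  (forall t, tq <= t -> Ym t = WT A b kp th) ->
  is_min_eig P lminP -> is_max_eig P lmaxP -> is_min_eig Q lminQ ->
  let chi x xr kxh krh thh t :=
    chi_norm (x t - xr t) (kxh t - kx) (krh t - kr) (thh t - th) in
  let kappa := 2^-1 * (Num.min lminQ (2 * `|kp| ^+ 2 * (b^T *m b) 0 0)
                       / Num.max lmaxP `|kp|) in
  let alpha := Num.sqrt (Num.max lmaxP `|kp| / Num.min lminP `|kp|) in
  (* (1) uniform stability of the origin for initial times s >= t0 *)
  (forall eps : R, 0 < eps -> exists delta : R, 0 < delta /\
     forall (s : R) x xr kxh krh thh, t0 <= s ->
       closed_loop_sol A b kp kps th phi Ar br r P Ym tq s x xr kxh krh thh ->
       chi x xr kxh krh thh s < delta ->
       forall t, s <= t -> chi x xr kxh krh thh t < eps) /\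
  (* (2) (uniform) exponential stability for initial times s > tq *)
  (exists c k lam : R, [/\ 0 < c, 0 < k, 0 < lam &
     forall (s : R) x xr kxh krh thh, tq < s ->
       closed_loop_sol A b kp kps th phi Ar br r P Ym tq s x xr kxh krh thh ->
       chi x xr kxh krh thh s < c ->
       forall t, s <= t ->
         chi x xr kxh krh thh t <= k * expR (- lam * (t - s)) * chi x xr kxh krh thh s]) /\
  (* (3) explicit exponential bound from t0 *)
  (forall x xr kxh krh thh,
     closed_loop_sol A b kp kps th phi Ar br r P Ym tq t0 x xr kxh krh thh ->
     forall t, tq < t ->
       chi x xr kxh krh thh t <= alpha * expR (- kappa * (t - tq)) * chi x xr kxh krh thh t0).
Proof.
(* Lipschitz continuity of phi, the Hurwitz property and boundedness of r only
   serve to guarantee solutions exist; closed_loop_sol presupposes one. *)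
move=> bb_gt0 kp_neq0 kps_sg _ _ _ posP posQ lyapPQ matchA matchb t0_lt_tq YmE
  minP maxP minQ chi kappa alpha.
have [symP _] := posP; have [symQ _] := posQ.
have lminP_gt0 := min_eig_gt0 posP minP; have lminQ_gt0 := min_eig_gt0 posQ minQ.
have kp_gt0 : 0 < `|kp| by rewrite normr_gt0.
have alpha_gt0 : 0 < alpha.
  by rewrite sqrtr_gt0 divr_gt0 // ?lt_min ?lt_max ?lminP_gt0 ?kp_gt0 ?orbT.
have kappa_gt0 : 0 < kappa.
  have kb_gt0 : 0 < 2 * `|kp| ^+ 2 * (b^T *m b) 0 0 by rewrite !mulr_gt0 // exprn_gt0.
  by rewrite mulr_gt0 ?invr_gt0 // divr_gt0 ?lt_max ?lt_min ?kp_gt0 ?lminQ_gt0 ?orbT.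
have bound := closed_loop_chi_bound kp_neq0 kps_sg symP lyapPQ matchA matchb
  (phi := phi) (r := r) YmE bb_gt0 minP maxP minQ lminP_gt0 lminQ_gt0 symQ.
have two_kappa : 2 * kappa = Num.min lminQ (2 * `|kp| ^+ 2 * dot b b) / Num.max lmaxP `|kp|.
  by rewrite /kappa mulrA mulfV ?mul1r // pnatr_eq0.
split; [|split].
- move=> eps eps_gt0; exists (eps / alpha); split; first by rewrite divr_gt0.
  move=> s x xr kxh krh thh _ sol_s chi_s t st.
  apply: le_lt_trans (bound _ _ _ _ _ _ 0 _ _ _ sol_s (lexx s) (lexx s) st (or_introl erefl)) _.
  by rewrite oppr0 mul0r expR0 mulr1 mulrC -ltr_pdivlMr.
- exists 1, alpha, kappa; split => // s x xr kxh krh thh tq_lt_s sol_s _ t st.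
  by apply: bound sol_s (lexx s) (lexx s) st _; right; split => //; exact: ltW.
- move=> x xr kxh krh thh sol_t0 t tq_lt_t.
  apply: bound sol_t0 (lexx t0) (ltW t0_lt_tq) (ltW tq_lt_t) _.
  by right; split.
Qed.
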